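(* Let $n\ge 1$, let $A^*\in\mathbb{R}^{n\times n}$ and $b^*\in\mathbb{R}^n$, and consider the closed-loop affine system $\dot{x}=A^*x+b^*$ on $\mathbb{R}^n$. (This is the system $\dot{x}_m=A_mx_m+B_mu_m$ under an affine feedback with $B_mu_m=B_{m1}x_m+B_{m2}$, so that $A^*=A_m+B_{m1}$ and $b^*=B_{m2}$.) Let $R_k=\{x\in\mathbb{R}^n: a^k_j\le x_j\le b^k_j \text{ for all } j=1,\dots,n\}$ with $a^k_j<b^k_j$ for all $j$, and fix a transition direction $i\in\{1,\dots,n\}$. Let $e_{kl}=\{x\in R_k: x_i=b^k_i\}$ be the facet of $R_k$ shared with the neighbouring rectangle $R_l$, and $\overline{e_{kl}}=\{x\in R_k: x_i=a^k_i\}$ the opposite facet. Define $$C^*=\sum_{j=1,\,j\neq i}^{n}\min_{a^k_j\le y_j\le b^k_j}\big(A^*_{ij}\,y_j\big),\qquad\text{i.e. the $j$-th term is } A^*_{ij}a^k_j \text{ if } A^*_{ij}>0,\ A^*_{ij}b^k_j \text{ if } A^*_{ij}<0,\ 0 \text{ if } A^*_{ij}=0,$$ and set $x^0=a^k_i$, $x^1=b^k_i$. Assume $A^*_{ii}\neq 0$ and $A^*_{ii}y+C^*+b^*_i>0$ for all $y\in[x^0,x^1]$. Let $x(\cdot)$ be the solution with $x(0)\in\overline{e_{kl}}$, and assume that $e_{kl}$ is reached without leaving $R_k$ in the following sense: for every $t\ge 0$ such that $x_i(s)<b^k_i$ for all $s\in[0,t]$, one has $x(t)\in R_k$. Then there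 exists $t_1$ with $$0\le t_1\le T^{max}:=\frac{1}{A^*_{ii}}\ln\!\left(\frac{A^*_{ii}x^1+C^*+b^*_i}{A^*_{ii}x^0+C^*+b^*_i}\right)$$ such that $x_i(t_1)=b^k_i$, i.e. the trajectory reaches the facet $e_{kl}$ (transition $R_k\to R_l$) within time $T^{max}$.
   Context: $A^*_{ij}$ denotes the $(i,j)$ entry of $A^*$ and $b^*_i$, $x_i$ the $i$-th entries of the vectors $b^*$, $x$. The rectangles $R_k$ are cells of a partition of the workspace used to abstract an agent's motion into a weighted transition system; $T^{max}$ is used as the weight (maximum transition time) of the transition $R_k\to R_l$ across their common facet in the positive direction of coordinate $i$. *)

From HB Require Import structures.
From mathcomp Require Import all_boot all_order all_algebra.
From mathcomp Require Import all_classical all_reals all_analysis.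
Set Implicit Arguments. Unset Strict Implicit. Unset Printing Implicit Defensive.
Import Order.TTheory GRing.Theory Num.Theory.
Import numFieldNormedType.Exports.
Local Open Scope ring_scope.

Definition min_term (R : realType) (Aij aj bj : R) : R :=
  if 0 < Aij then Aij * aj else if Aij < 0 then Aij * bj else 0.

Definition Cstar (R : realType) (n : nat) (A : 'M[R]_n) (a b : 'I_n -> R)
  (i : 'I_n) : R :=
  \sum_(j < n | j != i) min_term (A i j) (a j) (b j).

Definition in_rect (R : realType) (n : nat) (a b : 'I_n -> R) (x : 'cV[R]_n) :=
  forall j : 'I_n, a j <= x j 0 <= b j.

Definition Tmax (R : realType) (n : nat) (A : 'M[R]_n) (bs : 'cV[R]_n)
  (a b : 'I_n -> R) (i : 'I_n) : R :=
  (A i i)^-1 * ln ((A i i * b i + Cstar A a b i + bs i 0) /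
                   (A i i * a i + Cstar A a b i + bs i 0)).

(* On R_k the i-th component of the field satisfies
   x_i' >= A_ii x_i + C* + b_i, each off-diagonal term A_ij x_j being bounded
   below by its minimum over [a_j, b_j]. Multiplying by the integrating factor
   exp(-A_ii t) shows that x_i stays above the solution of the scalar equation
   y' = A_ii y + C* + b_i started at a_i, which reaches b_i exactly at time
   T^max. Hence if x_i stayed below b_i on [0, T^max], the trajectory would stay
   in R_k and x_i(T^max) >= b_i, a contradiction; so x_i crosses b_i before
   T^max, and the intermediate value theorem gives the crossing time. *)

From HB Require Import structures.
From mathcomp Require Import all_boot all_order all_algebra.
From mathcomp Require Import all_classical all_reals all_analysis.
From mathcomp Require Import ring.
Import Order.TTheory GRing.Theory Num.Theory.
Import numFieldNormedType.Exports.
Local Open Scope ring_scope.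

Lemma min_term_le (R : realType) (Aij aj bj y : R) :
  aj <= y <= bj -> min_term Aij aj bj <= Aij * y.
Proof.
move=> /andP[ajy ybj]; rewrite /min_term.
case: ltrP => [Apos|Anpos]; first by rewrite ler_pM2l.
case: ltrP => [Aneg|Annneg]; first by rewrite ler_nM2l.
by rewrite (@le_anti _ _ Aij 0) ?Anpos ?Annneg ?mul0r.
Qed.

Lemma in_rect_drift_ge (R : realType) (n : nat) (A : 'M[R]_n) (bs : 'cV[R]_n)
    (a b : 'I_n -> R) (i : 'I_n) (z : 'cV[R]_n) :
  in_rect a b z ->
  A i i * z i 0 + Cstar A a b i + bs i 0 <= (A *m z + bs) i 0.
Proof.
move=> zR; rewrite !mxE (bigD1 i) //= lerD2r lerD2l.
by apply: ler_sum => j _; apply: min_term_le.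
Qed.

Lemma affine_ln_ratio_gt0 (R : realType) (al K u v : R) :
  al != 0 -> u < v -> 0 < al * u + K -> 0 < al * v + K ->
  0 < al^-1 * ln ((al * v + K) / (al * u + K)).
Proof.
move=> al0 uv gu gv; have [alpos|alneg] := ltrP 0 al.
  rewrite mulr_gt0 ?invr_gt0 // ln_gt0 // ltr_pdivlMr // mul1r.
  by rewrite ltrD2r ltr_pM2l.
move: alneg; rewrite le_eqVlt (negPf al0) /= => alneg.
rewrite nmulr_rgt0 ?invr_lt0 // ln_lt0 // divr_gt0 //= ltr_pdivrMr // mul1r.
by rewrite ltrD2r ltr_nM2l.
Qed.

Lemma continuous_reaches_level (R : realType) (f : R -> R) (t0 T v : R) :
  continuous f -> f t0 <= v -> (exists2 s, t0 <= s <= T & v <= f s) ->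
  exists t, t0 <= t <= T /\ f t = v.
Proof.
move=> fC ft0v [s /andP[t0s sT] vfs].
have [||t /[!in_itv] /= /andP[t0t ts] ftv] := @IVT R f t0 s v t0s.
- by apply: continuous_subspaceT.
- by rewrite ge_min le_max ft0v vfs orbT.
by exists t; rewrite t0t (le_trans ts sT).
Qed.

Lemma affine_growth_lower_bound (R : realType) (f f' : R -> R) (al K T : R) :
  al != 0 -> 0 <= T -> (forall s : R, is_derive s 1 f (f' s)) ->
  (forall s, 0 < s < T -> al * f s + K <= f' s) ->
  (f 0 + K / al) * expR (al * T) <= f T + K / al.
Proof.
move=> al0 + df f'_ge; rewrite le_eqVlt => /predU1P[<-|T0].
  by rewrite mulr0 expR0 mulr1.
pose E (s : R) := expR (- al * s).
pose psi s := (f s + K / al) * E s.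
have dE (s : R) : is_derive s 1 E (E s * - al).
  have dlin : is_derive s 1 (fun s : R => - al * s) (- al).
    by have := is_deriveZ (- al) (@is_derive_id R R^o s 1); rewrite /= scaler1.
  exact: (@is_derive1_comp R expR (fun s => - al * s)).
have dpsi (s : R) : is_derive s 1 psi ((f s + K / al) * (E s * - al) + E s * f' s).
  have := is_deriveD (df s) (@is_derive_cst R R^o R^o (K / al) s 1).
  by rewrite addr0 => dF; exact: (is_deriveM dF (dE s)).
have [|c /[!in_itv] /= /andP[c0 cT] psiT] := MVT T0 (fun c _ => dpsi c).
  apply: continuous_subspaceT => t.
  by apply/differentiable_continuous/derivable1_diffP; case: (dpsi t).
(* Integrating factor: psi' = E (f' - (al f + K)) >= 0. *)
have psi_mono : psi 0 <= psi T.
  rewrite -subr_ge0 psiT subr0; apply: mulr_ge0 (ltW T0).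
  have -> : (f c + K / al) * (E c * - al) + E c * f' c =
            E c * (f' c - (al * f c + K)) by field.
  by rewrite mulr_ge0 ?expR_ge0 // subr_ge0 f'_ge // c0 cT.
rewrite -(ler_pM2r (expR_gt0 (- al * T))) -mulrA -expRD mulNr addrN expR0 mulr1.
by move: psi_mono; rewrite /psi /E mulr0 expR0 mulr1 mulNr.
Qed.

Theorem theorem1 (R : realType) (n : nat) (A : 'M[R]_n) (bs : 'cV[R]_n)
  (a b : 'I_n -> R) (i : 'I_n) (x : R -> 'cV[R]_n) :
  (forall j, a j < b j) ->
  (* x solves xdot = A^* x + b^* *)
  (forall (t : R) (j : 'I_n),
     is_derive t 1 (fun s => x s j 0) ((A *m x t + bs) j 0)) ->
  A i i != 0 ->
  (forall y : R, a i <= y <= b i -> 0 < A i i * y + Cstar A a b i + bs i 0) ->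
  (* x(0) lies on the opposite facet of R_k *)
  in_rect a b (x 0) -> x 0 i 0 = a i ->
  (* e_kl is reached without leaving R_k *)
  (forall t : R, 0 <= t -> (forall s : R, 0 <= s <= t -> x s i 0 < b i) ->
     in_rect a b (x t)) ->
  exists t1 : R, 0 <= t1 <= Tmax A bs a b i /\ x t1 i 0 = b i.
Proof.
move=> ab dx Aii0 gpos _ x0a stay.
set T := Tmax A bs a b i; set K := Cstar A a b i + bs i 0.
have [ga gb] : 0 < A i i * a i + K /\ 0 < A i i * b i + K.
  by rewrite !addrA !gpos ?lexx ?ltW.
have T0 : 0 < T by rewrite /T /Tmax -!addrA affine_ln_ratio_gt0.
have [[s sT bs_le]|below] := pselect (exists2 s, 0 <= s <= T & b i <= x s i 0).
  apply: (@continuous_reaches_level R (fun s => x s i 0) 0 T (b i)).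
  - move=> t; apply/differentiable_continuous/derivable1_diffP.
    by case: (dx t i).
  - by rewrite x0a ltW.
  - by exists s.
have {}below s : 0 <= s <= T -> x s i 0 < b i.
  by move=> sT; rewrite ltNge; apply/negP => bs_le; apply: below; exists s.
have expT : expR (A i i * T) = (A i i * b i + K) / (A i i * a i + K).
  by rewrite /T /Tmax -!addrA mulrA mulfV // mul1r lnK // posrE divr_gt0.
have reach : b i + K / A i i <= x T i 0 + K / A i i.
  have <- : (a i + K / A i i) * expR (A i i * T) = b i + K / A i i.
    by rewrite expT; field; rewrite Aii0 lt0r_neq0.
  rewrite -x0a; apply: (@affine_growth_lower_bound R (fun s => x s i 0))
    (ltW T0) (dx^~ i) _ => // s /andP[s0 sT].
  rewrite /K addrA; apply/in_rect_drift_ge/stay => [|r /andP[r0 rs]]; first exact: ltW.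
  by rewrite below // r0 (le_trans rs (ltW sT)).
by move: reach; rewrite lerD2r leNgt below ?lexx ?ltW.
Qed.
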